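(* Let \(R\) be a nuclear bornological \(V\)-algebra. Then the linear growth bornological algebra \(\mathrm{ling}(R)\) and its completion \(R^{\dagger}=\overline{\mathrm{ling}(R)}\) are nuclear.
   Context: Let \(V\) be a complete discrete valuation ring with uniformiser \(\pi\). A bornology on a set is a collection of subsets (called bounded) containing all finite subsets and closed under finite unions and under taking subsets. A bornological \(V\)-module is a \(V\)-module with a bornology such that every bounded subset is contained in a bounded \(V\)-submodule; it is complete if every bounded subset is contained in a bounded \(\pi\)-adically complete \(V\)-submodule. The completion \(\overline M\) of \(M\) is the complete bornological \(V\)-module with a bounded map \(M\to\overline M\) through which every bounded map from \(M\) to a complete module factors uniquely. A bornological \(V\)-algebra is a \(V\)-algebra with such a bornology and bounded multiplication. The linear growth bornology on \(R\) is the bornology generated by the \(V\)-submodules \(\sum_{i\ge0}\pi^iS^{i+1}\) for \(S\subseteq R\) bounded in the original bornology; \(\mathrm{ling}(R)\) denotes \(R\) with this bornology. A subset \(S\) of a bornological \(V\)-module \(M\) is compactoid if there is a bounded \(V\)-submodule \(T\subseteq M\) with \(S\subseteq T\) such that for every \(n\) there is a finite \(F_n\subseteq T\) with \(S\subseteq VF_n+\pi^nT\); \(M\) is nuclear if every bounded subset is compactoid. *)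

From HB Require Import structures.
From mathcomp Require Import all_boot all_order all_algebra.
From mathcomp Require Import boolp classical_sets functions cardinality.
Set Implicit Arguments. Unset Strict Implicit. Unset Printing Implicit Defensive.
Import GRing.Theory.
Local Open Scope ring_scope.
Local Open Scope classical_set_scope.

Section Defs.
Variables (V : idomainType).

Definition is_dvr_unif (pi : V) : Prop :=
  [/\ pi != 0, pi \isn't a GRing.unit &
      forall x : V, x != 0 -> exists u : V, exists n : nat,
        u \is a GRing.unit /\ x = u * pi ^+ n].

Definition pi_complete_ring (pi : V) : Prop :=
  (forall x : V, (forall n : nat, exists y, x = pi ^+ n * y) -> x = 0) /\
  (forall a : nat -> V,
     (forall n, exists y, a n.+1 - a n = pi ^+ n * y) ->
     exists l : V, forall n, exists y, l - a n = pi ^+ n * y).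

Definition is_complete_dvr (pi : V) : Prop :=
  is_dvr_unif pi /\ pi_complete_ring pi.

Section Mod.
Variable M : lmodType V.

Definition submodule (T : set M) : Prop :=
  [/\ T 0, (forall x y, T x -> T y -> T (x + y)) &
      (forall (a : V) x, T x -> T (a *: x))].

Definition pimul (pi : V) (n : nat) (T : set M) : set M :=
  [set pi ^+ n *: t | t in T].

Definition span (A : set M) : set M :=
  [set x | exists s : seq (V * M),
      (forall p, p \in s -> A p.2) /\ x = \sum_(p <- s) p.1 *: p.2].

Definition pi_complete_sub (pi : V) (T : set M) : Prop :=
  [/\ submodule T,
      (forall x, T x -> (forall n, pimul pi n T x) -> x = 0) &
      (forall a : nat -> M, (forall n, T (a n)) ->
         (forall n, pimul pi n T (a n.+1 - a n)) ->
         exists2 l, T l & forall n, pimul pi n T (l - a n))].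

Definition is_bornology (B : set (set M)) : Prop :=
  [/\ (forall F : set M, finite_set F -> B F),
      (forall S1 S2, B S1 -> B S2 -> B (S1 `|` S2)) &
      (forall S1 S2, S1 `<=` S2 -> B S2 -> B S1)].

Definition born_mod (B : set (set M)) : Prop :=
  is_bornology B /\
  forall S, B S -> exists T, [/\ submodule T, B T & S `<=` T].

Definition complete_born_mod (pi : V) (B : set (set M)) : Prop :=
  is_bornology B /\
  forall S, B S -> exists T, [/\ pi_complete_sub pi T, B T & S `<=` T].

Definition compactoid (pi : V) (B : set (set M)) (S : set M) : Prop :=
  exists T : set M, [/\ submodule T, B T, S `<=` T &
    forall n : nat, exists F : set M, [/\ finite_set F, F `<=` T &
      S `<=` [set x + y | x in span F & y in pimul pi n T]]].

Definition nuclear (pi : V) (B : set (set M)) : Prop :=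
  forall S, B S -> compactoid pi B S.

Definition is_Valgebra (mul : M -> M -> M) : Prop :=
  [/\ associative mul,
      (forall (a : V) x y z, mul (a *: x + y) z = a *: mul x z + mul y z) &
      (forall (a : V) x y z, mul x (a *: y + z) = a *: mul x y + mul x z)].

Definition born_alg (mul : M -> M -> M) (B : set (set M)) : Prop :=
  born_mod B /\
  forall S1 S2, B S1 -> B S2 -> B [set mul x y | x in S1 & y in S2].

Definition nprod (mul : M -> M -> M) (x0 : M) (xs : seq M) : M :=
  foldl mul x0 xs.

(* the V-submodule  sum_{i >= 0} pi^i S^{i+1} *)
Definition ling_gen (mul : M -> M -> M) (pi : V) (S : set M) : set M :=
  span [set pi ^+ (size xs) *: nprod mul x0 xs | x0 in S & xs in
          [set xs : seq M | forall x, x \in xs -> S x]].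

Definition ling (mul : M -> M -> M) (pi : V) (B : set (set M)) : set (set M) :=
  [set T | forall B' : set (set M), is_bornology B' ->
     (forall S, B S -> B' (ling_gen mul pi S)) -> B' T].

End Mod.

Definition is_linear (M N : lmodType V) (f : M -> N) : Prop :=
  forall (a : V) x y, f (a *: x + y) = a *: f x + f y.

Definition bounded_map (M N : lmodType V) (BM : set (set M)) (BN : set (set N))
  (f : M -> N) : Prop :=
  forall S, BM S -> BN (f @` S).

Definition is_completion (pi : V) (M : lmodType V) (BM : set (set M))
  (C : lmodType V) (BC : set (set C)) (j : M -> C) : Prop :=
  [/\ complete_born_mod pi BC, is_linear j, bounded_map BM BC j &
      forall (N : lmodType V) (BN : set (set N)) (f : M -> N),
        complete_born_mod pi BN -> is_linear f -> bounded_map BM BN f ->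
        exists g : C -> N, [/\ is_linear g, bounded_map BC BN g,
          (forall x, g (j x) = f x) &
          forall g' : C -> N, is_linear g' -> bounded_map BC BN g' ->
            (forall x, g' (j x) = f x) -> forall c, g' c = g c]].

End Defs.

From Pilot Require Import Defs.
From HB Require Import structures.
From mathcomp Require Import all_boot all_order all_algebra.
From mathcomp Require Import boolp classical_sets functions cardinality.
From mathcomp Require Import zify.

(* Nuclearity of ling(R): every ling-bounded set lies in L(S) = sum_i pi^i S^(i+1)
   for a bounded S.  Given n, nuclearity of R gives S within V F + pi^n T with F
   finite.  Expanding a monomial pi^k x_0 ... x_k with k <= 2n shows that it lies
   in the span of the finitely many pi^k f_0 ... f_k, modulo pi^n L(W) for a
   bounded submodule W containing S, T and S S.  When k >= 2n, grouping the
   factors in pairs rewrites it as pi^n times pi^(k-n) w_0 ... w_(k-n) with the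
   w_i in W.

   Nuclearity of the completion: in a complete bornology the compactoid sets
   again form a complete bornology, since the hull of a compactoid set, i.e. the
   set of x in T_0 lying in V F_n + pi^n T_0 for all n, is pi-adically closed in
   the complete submodule T_0.  The completion map is bounded for this finer
   bornology, so by the universal property the identity of the completion maps
   bounded sets to compactoid ones.  Neither part uses that V is complete or
   that pi is a uniformiser. *)

Set Implicit Arguments. Unset Strict Implicit. Unset Printing Implicit Defensive.
Import GRing.Theory.
Local Open Scope ring_scope.
Local Open Scope classical_set_scope.

Section LinearMaps.
Variables (V : idomainType) (M N : lmodType V) (f : M -> N).
Hypothesis f_lin : is_linear f.

Lemma is_linear0 : f 0 = 0.
Proof.
have f00 := f_lin 1 0 0; rewrite scaler0 scale1r addr0 in f00.
by apply: (@addrI _ (f 0)); rewrite addr0 -f00.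
Qed.

Lemma is_linearD x y : f (x + y) = f x + f y.
Proof. by have := f_lin 1 x y; rewrite !scale1r. Qed.

Lemma is_linearZ a x : f (a *: x) = a *: f x.
Proof. by rewrite -[a *: x]addr0 f_lin is_linear0 addr0. Qed.

Lemma is_linear_scale c : is_linear (fun x => c *: f x).
Proof. by move=> a x y; rewrite f_lin scalerDr !scalerA mulrC. Qed.

End LinearMaps.

Section Submodules.
Variables (V : idomainType) (M : lmodType V).
Implicit Types T U : set M.

Lemma submodule0 T : submodule T -> T 0.
Proof. by case. Qed.

Lemma submoduleD T x y : submodule T -> T x -> T y -> T (x + y).
Proof. by case=> _ + _; apply. Qed.

Lemma submoduleZ T a x : submodule T -> T x -> T (a *: x).
Proof. by case=> _ _; apply. Qed.

Lemma submoduleB T x y : submodule T -> T x -> T y -> T (x - y).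
Proof.
by move=> sT Tx Ty; rewrite -scaleN1r; apply: submoduleD => //; exact: submoduleZ.
Qed.

Lemma submodule_sum T (F : nat -> M) m :
  submodule T -> (forall i, T (F i)) -> T (\sum_(i < m) F i).
Proof.
move=> sT TF; elim: m => [|m IH]; first by rewrite big_ord0; apply: submodule0.
by rewrite big_ord_recr; apply: submoduleD.
Qed.

Lemma submodule_bigcap (J : Type) (F : J -> set M) :
  (forall i, submodule (F i)) -> submodule (\bigcap_i F i).
Proof.
move=> sF; split=> [i _|x y Fx Fy i _|a x Fx i _].
- exact: submodule0 (sF i).
- exact: submoduleD (sF i) (Fx i I) (Fy i I).
- exact: submoduleZ (sF i) (Fx i I).
Qed.

Lemma submodule_sumset T U :
  submodule T -> submodule U -> submodule [set x + y | x in T & y in U].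
Proof.
move=> sT sU; split.
- by exists 0; [exact: submodule0 | exists 0; [exact: submodule0 | rewrite addr0]].
- move=> _ _ [x1 Tx1 [y1 Uy1 <-]] [x2 Tx2 [y2 Uy2 <-]].
  exists (x1 + x2); first exact: submoduleD.
  by exists (y1 + y2); [exact: submoduleD | rewrite addrACA].
- move=> a _ [x Tx [y Uy <-]]; exists (a *: x); first exact: submoduleZ.
  by exists (a *: y); [exact: submoduleZ | rewrite scalerDr].
Qed.

End Submodules.

Section Span.
Variables (V : idomainType) (M : lmodType V).
Implicit Types (A U : set M).

Lemma sub_span A : A `<=` Defs.span A.
Proof.
move=> x Ax; exists [:: (1, x)]; split; last by rewrite big_seq1 scale1r.
by move=> p; rewrite inE => /eqP ->.
Qed.

Lemma span_mono A A' : A `<=` A' -> Defs.span A `<=` Defs.span A'.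
Proof. by move=> AA' x [s [sA ->]]; exists s; split=> // p /sA /AA'. Qed.

Lemma span_submodule A : submodule (Defs.span A).
Proof.
split.
- by exists [::]; split=> //; rewrite big_nil.
- move=> x y [s [sA ->]] [t [tA ->]]; exists (s ++ t); split; last by rewrite big_cat.
  by move=> p; rewrite mem_cat => /orP [/sA|/tA].
- move=> a x [s [sA ->]]; exists [seq (a * p.1, p.2) | p <- s]; split.
    by move=> p /mapP [q /sA Aq ->].
  by rewrite big_map scaler_sumr; apply: eq_bigr => p _; rewrite scalerA.
Qed.

Lemma linear_span_in (N : lmodType V) (f : M -> N) A (U : set N) :
  submodule U -> is_linear f -> (forall x, A x -> U (f x)) ->
  forall x, Defs.span A x -> U (f x).
Proof.
move=> sU f_lin fAU x [s [sA ->]].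
elim: s sA => [|p s IH] sA.
  by rewrite big_nil (is_linear0 f_lin); apply: submodule0.
rewrite big_cons f_lin; apply: submoduleD => //.
  by apply: submoduleZ => //; apply/fAU/sA/mem_head.
by apply: IH => q sq; apply: sA; rewrite inE sq orbT.
Qed.

Lemma span_subset_submodule A U : submodule U -> A `<=` U -> Defs.span A `<=` U.
Proof. by move=> sU AU x; apply: (linear_span_in (f := id)). Qed.

End Span.

Section PiMultiples.
Variables (V : idomainType) (pi : V) (M : lmodType V).
Implicit Types (A T U : set M).

Lemma submodule_pimul n T : submodule T -> submodule (pimul pi n T).
Proof.
move=> sT; split.
- by exists 0; [exact: submodule0 | rewrite scaler0].
- move=> _ _ [x Tx <-] [y Ty <-]; exists (x + y); first exact: submoduleD.
  by rewrite scalerDr.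
- move=> a _ [x Tx <-]; exists (a *: x); first exact: submoduleZ.
  by rewrite !scalerA mulrC.
Qed.

Lemma pimul_subset n T : submodule T -> pimul pi n T `<=` T.
Proof. by move=> sT _ [x Tx <-]; exact: submoduleZ. Qed.

Lemma pimul_mono n T U : T `<=` U -> pimul pi n T `<=` pimul pi n U.
Proof. exact: image_subset. Qed.

Definition spanD_pimul n A T := [set x + y | x in Defs.span A & y in pimul pi n T].

Lemma submodule_spanD_pimul n A T : submodule T -> submodule (spanD_pimul n A T).
Proof. by move=> sT; apply/submodule_sumset/submodule_pimul/sT/span_submodule. Qed.

Lemma spanD_pimul_mono n A A' T U :
  A `<=` A' -> T `<=` U -> spanD_pimul n A T `<=` spanD_pimul n A' U.
Proof.
move=> AA' TU _ [x Ax [y Ty <-]]; exists x; first exact: span_mono Ax.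
by exists y => //; exact: pimul_mono Ty.
Qed.

Lemma sub_spanD_pimul n A T : submodule T -> A `<=` spanD_pimul n A T.
Proof.
move=> sT x Ax; exists x; first exact: sub_span.
by exists 0; [exact: submodule0 (submodule_pimul n sT) | rewrite addr0].
Qed.

Lemma spanD_pimul_subset n A T : submodule T -> A `<=` T -> spanD_pimul n A T `<=` T.
Proof.
move=> sT AT _ [x Ax [y Ty <-]]; apply: submoduleD => //.
  exact: span_subset_submodule Ax.
exact: pimul_subset Ty.
Qed.

End PiMultiples.

Section Compactoid.
Variables (V : idomainType) (pi : V) (M : lmodType V) (BM : set (set M)).

Lemma compactoid_subset S S' : S' `<=` S -> compactoid pi BM S -> compactoid pi BM S'.
Proof.
move=> S'S [T [sT BT ST cT]]; exists T; split=> //; first exact: subset_trans ST.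
by move=> n; have [F [fF FT SF]] := cT n; exists F; split=> //; exact: subset_trans SF.
Qed.

Lemma compactoid_bounded S : is_bornology BM -> compactoid pi BM S -> BM S.
Proof. by move=> [_ _ BMsub] [T [_ BT ST _]]; exact: BMsub BT. Qed.

Hypothesis BM_mod : born_mod BM.

Lemma compactoid_finite F : finite_set F -> compactoid pi BM F.
Proof.
move=> fF; have [[BMfin _ _] BMsub] := BM_mod.
have [T [sT BT FT]] := BMsub F (BMfin F fF).
exists T; split=> // n; exists F; split=> //.
exact: sub_spanD_pimul.
Qed.

Lemma compactoid_setU S1 S2 :
  compactoid pi BM S1 -> compactoid pi BM S2 -> compactoid pi BM (S1 `|` S2).
Proof.
move=> [T1 [_ BT1 ST1 cT1]] [T2 [_ BT2 ST2 cT2]]; have [[_ BMU _] BMsub] := BM_mod.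
have [T [sT BT]] := BMsub _ (BMU _ _ BT1 BT2); rewrite subUset => -[T1T T2T].
exists T; split=> //.
  by rewrite subUset; split; [exact: subset_trans ST1 T1T | exact: subset_trans ST2 T2T].
move=> n; have [F1 [fF1 F1T1 SF1]] := cT1 n; have [F2 [fF2 F2T2 SF2]] := cT2 n.
exists (F1 `|` F2); split; first by rewrite finite_setU.
  rewrite subUset; split; first exact: subset_trans F1T1 T1T.
  exact: subset_trans F2T2 T2T.
rewrite subUset; split.
- by apply: subset_trans SF1 _; apply: spanD_pimul_mono T1T; exact: subsetUl.
- by apply: subset_trans SF2 _; apply: spanD_pimul_mono T2T; exact: subsetUr.
Qed.

Lemma compactoid_bornology : is_bornology (compactoid pi BM).
Proof.
split; [exact: compactoid_finite | exact: compactoid_setU |].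
by move=> S1 S2 S12; exact: compactoid_subset.
Qed.

End Compactoid.

Lemma compactoid_image (V : idomainType) (pi : V) (M N : lmodType V)
    (BM : set (set M)) (BN : set (set N)) (f : M -> N) S :
  is_linear f -> bounded_map BM BN f -> compactoid pi BM S -> compactoid pi BN (f @` S).
Proof.
move=> f_lin f_bd [T [sT BT ST cT]].
exists (f @` T); split; [| exact: f_bd | exact: image_subset |].
  split.
  - by exists 0; [exact: submodule0 | exact: is_linear0].
  - move=> _ _ [x Tx <-] [y Ty <-]; exists (x + y); first exact: submoduleD.
    exact: is_linearD.
  - move=> a _ [x Tx <-]; exists (a *: x); first exact: submoduleZ.
    exact: is_linearZ.
move=> n; have [F [fF FT SF]] := cT n.
exists (f @` F); split; [exact: finite_image | exact: image_subset |].
move=> _ [x /SF [u Fu [_ [t Tt <-] <-]] <-].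
exists (f u).
  apply: linear_span_in (span_submodule _) f_lin _ _ Fu => y Fy.
  by apply: sub_span; exists y.
exists (pi ^+ n *: f t); first by exists (f t) => //; exists t.
by rewrite (is_linearD f_lin) (is_linearZ f_lin).
Qed.

Section PiAdicCompleteness.
Variables (V : idomainType) (pi : V) (M : lmodType V).
Implicit Types T : set M.

Lemma scale_telescope (a t : nat -> M) k m :
  (forall n, pi ^+ n *: t n = a n.+1 - a n) ->
  pi ^+ k *: \sum_(i < m) pi ^+ i *: t (k + i)%N = a (k + m)%N - a k.
Proof.
move=> da; elim: m => [|m IH]; first by rewrite big_ord0 scaler0 addn0 subrr.
rewrite big_ord_recr scalerDr IH scalerA -exprD da addnS.
by rewrite addrC addrA subrK.
Qed.

Definition pi_closed_in T0 T :=
  forall x, T0 x -> (forall n, exists2 y, T y & pimul pi n T0 (x - y)) -> T x.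

Lemma pi_closed_complete T0 T :
  pi_complete_sub pi T0 -> submodule T -> T `<=` T0 -> pi_closed_in T0 T ->
  pi_complete_sub pi T.
Proof.
move=> [sT0 sep0 lim0] sT TT0 clT; split=> //.
  move=> x /TT0 T0x Tsep; apply: sep0 => // n.
  by apply: pimul_mono TT0 _ (Tsep n).
have limT b : (forall n, T (b n)) -> (forall n, pimul pi n T (b n.+1 - b n)) ->
    exists2 l, T l & forall n, pimul pi n T0 (l - b n).
  move=> Tb db.
  have [l T0l bl] := lim0 b (fun n => TT0 _ (Tb n)) (fun n => pimul_mono TT0 (db n)).
  by exists l => //; apply: clT => // n; exists (b n).
move=> a Ta da; have [l Tl al] := limT a Ta da.
exists l => // k.
have /choice [t /all_and2 [Tt dat]] :
    forall n, exists t, T t /\ pi ^+ n *: t = a n.+1 - a n.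
  by move=> n; have [t Tt <-] := da n; exists t.
(* l - a k is pi^k times the limit in T of the rescaled tails b m, hence lies
   in pimul pi k T and not merely in pimul pi k T0. *)
pose b m := \sum_(i < m) pi ^+ i *: t (k + i)%N.
have Tb m : T (b m).
  apply: (submodule_sum (F := fun i => pi ^+ i *: t (k + i)%N)) => // i.
  exact: submoduleZ.
have db m : pimul pi m T (b m.+1 - b m).
  by exists (t (k + m)%N) => //; rewrite /b big_ord_recr /= addrC addrK.
have [z Tz bz] := limT b Tb db.
exists z => //; apply/eqP; rewrite -subr_eq0; apply/eqP; apply: sep0.
  apply: submoduleB => //; first by apply: submoduleZ => //; apply: TT0.
  by apply: submoduleB => //; apply: TT0.
move=> m; have [w T0w zw] := bz m; have [u T0u lu] := al (k + m)%N.
exists (pi ^+ k *: (w - u)); first by apply: submoduleZ => //; exact: submoduleB.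
rewrite scalerA -exprD addnC scalerBr lu exprD -scalerA zw scalerBr.
rewrite (scale_telescope k m dat).
by rewrite !opprB !addrA addrNK.
Qed.

Lemma compactoid_pi_complete_hull (BC : set (set M)) S :
  complete_born_mod pi BC -> compactoid pi BC S ->
  exists T, [/\ pi_complete_sub pi T, compactoid pi BC T & S `<=` T].
Proof.
move=> [_ BCsub] [T [_ BT ST /choice [Fs cFs]]].
have [T0 [cT0 BT0 TT0]] := BCsub T BT.
have sT0 : submodule T0 by case: cT0.
have FsT0 n : Fs n `<=` T0 by have [_ FT _] := cFs n; exact: subset_trans FT TT0.
pose hull := \bigcap_n spanD_pimul pi n (Fs n) T0.
have hullT0 : hull `<=` T0.
  by move=> x /(_ 0%N I); apply: spanD_pimul_subset.
exists hull; split.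
- apply: pi_closed_complete cT0 _ hullT0 _.
    by apply: submodule_bigcap => n; exact: submodule_spanD_pimul.
  move=> x T0x xhull n _.
  have [y /(_ n I) [u Fu [_ [v T0v <-] <-]] [w T0w xy]] := xhull n.
  exists u => //; exists (pi ^+ n *: (v + w)).
    by exists (v + w) => //; exact: submoduleD.
  by rewrite scalerDr addrA xy addrC subrK.
- exists T0; split=> // n; exists (Fs n); split=> //; first by have [] := cFs n.
  by move=> x /(_ n I).
- move=> x Sx n _; have [_ _ SFs] := cFs n.
  exact: spanD_pimul_mono TT0 _ (SFs x Sx).
Qed.

End PiAdicCompleteness.

Lemma complete_born_mod_born_mod (V : idomainType) (pi : V) (M : lmodType V)
    (BM : set (set M)) :
  complete_born_mod pi BM -> born_mod BM.
Proof.
move=> [BMborn BMsub]; split=> // S /BMsub [T [[sT _ _] BT ST]].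
by exists T.
Qed.

Lemma complete_born_mod_compactoid (V : idomainType) (pi : V) (M : lmodType V)
    (BM : set (set M)) :
  complete_born_mod pi BM -> complete_born_mod pi (compactoid pi BM).
Proof.
move=> cBM; split; first exact/compactoid_bornology/complete_born_mod_born_mod/cBM.
by move=> S /(compactoid_pi_complete_hull cBM) [T [cT CT ST]]; exists T.
Qed.

Lemma completion_nuclear (V : idomainType) (pi : V) (M C : lmodType V)
    (BM : set (set M)) (BC : set (set C)) (j : M -> C) :
  nuclear pi BM -> is_completion pi BM BC j -> nuclear pi BC.
Proof.
move=> nM [cBC j_lin j_bd univ].
have j_bd' : bounded_map BM (compactoid pi BC) j.
  by move=> S /nM; exact: compactoid_image.
have [g [g_lin g_bd gj _]] :=
  univ C _ j (complete_born_mod_compactoid cBC) j_lin j_bd'.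
have [g0 [_ _ _ univ_uniq]] := univ C _ j cBC j_lin j_bd.
have g_bd' : bounded_map BC BC g.
  by move=> S /g_bd; apply: compactoid_bounded; case: cBC.
have id_bd : bounded_map BC BC id by move=> S; rewrite image_id.
have gid : g = id.
  by apply/funext => c; rewrite (univ_uniq g) // -(univ_uniq id).
by move=> S /g_bd; rewrite gid image_id.
Qed.

Section PairGrouping.
Variables (T : eqType) (op : T -> T -> T) (S W : set T).
Hypotheses (opA : associative op) (SW : S `<=` W)
  (SSW : [set op x y | x in S & y in S] `<=` W).

Lemma foldl_group_pairs m xs y :
  (m <= size xs <= 2 * m)%N -> (forall x, x \in xs -> S x) ->
  exists gs, [/\ (forall g, g \in gs -> W g), size gs = m &
    foldl op y xs = foldl op y gs].
Proof.
elim: m xs y => [|m IH] [|x1 xs] y //=; first by exists [::].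
move=> /andP [m_le m_ge] Sxs.
have Sx1 : S x1 by apply: Sxs; exact: mem_head.
have {}Sxs x : x \in xs -> S x by move=> xxs; apply: Sxs; rewrite inE xxs orbT.
have [short|long] := leqP (size xs) (2 * m).
  have [|gs [Wgs <- ->]] := IH xs (op y x1) _ Sxs; first by apply/andP; split; lia.
  exists (x1 :: gs); split=> // g.
  by rewrite inE => /orP [/eqP ->|]; [exact: SW | exact: Wgs].
case: xs m_le m_ge long Sxs => [|x2 xs] //= m_le m_ge long Sxs.
have Sx2 : S x2 by apply: Sxs; exact: mem_head.
have {}Sxs x : x \in xs -> S x by move=> xxs; apply: Sxs; rewrite inE xxs orbT.
have [|gs [Wgs <- ->]] := IH xs (op (op y x1) x2) _ Sxs; first by apply/andP; split; lia.
exists (op x1 x2 :: gs); split=> //=; last by rewrite opA.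
move=> g; rewrite inE => /orP [/eqP ->|]; last exact: Wgs.
by apply: SSW; exists x1 => //; exists x2.
Qed.

End PairGrouping.

Section LinearGrowth.
Variables (V : idomainType) (pi : V) (R : lmodType V) (mul : R -> R -> R).
Hypothesis mul_alg : is_Valgebra mul.

Local Notation L := (ling_gen mul pi).

Lemma mul_linear_l z : is_linear (mul^~ z).
Proof. by case: mul_alg => _ mulDl _ a x y; exact: mulDl. Qed.

Lemma mul_linear_r x : is_linear (mul x).
Proof. by case: mul_alg => _ _ mulDr a y z; exact: mulDr. Qed.

Lemma sub_ling_gen W : W `<=` L W.
Proof.
move=> x Wx; apply: sub_span; exists x => //; exists [::] => //.
by rewrite expr0 scale1r.
Qed.

Lemma ling_gen_mono W W' : W `<=` W' -> L W `<=` L W'.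
Proof.
move=> WW'; apply: span_mono => _ [x0 Wx0 [xs Wxs <-]].
by exists x0; [exact: WW' | exists xs => // x /Wxs /WW'].
Qed.

Lemma ling_gen_mulr W u w : L W u -> W w -> L W (pi *: mul u w).
Proof.
move=> Lu Ww.
apply: (linear_span_in (f := fun u => pi *: mul u w)) (span_submodule _) _ _ _ Lu.
  exact: is_linear_scale (mul_linear_l w) _.
move=> _ [x0 Wx0 [xs Wxs <-]].
apply: sub_span; exists x0 => //; exists (rcons xs w).
  by move=> x; rewrite mem_rcons inE => /orP [/eqP ->|/Wxs].
by rewrite (is_linearZ (mul_linear_l w)) scalerA -exprS size_rcons /nprod foldl_rcons.
Qed.

Lemma span_mul (A A' : set R) c u v : Defs.span A u -> Defs.span A' v ->
  Defs.span [set c *: mul a a' | a in A & a' in A'] (c *: mul u v).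
Proof.
move=> Au A'v.
apply: (linear_span_in (f := fun v => c *: mul u v)) (span_submodule _) _ _ _ A'v.
  exact: is_linear_scale (mul_linear_r u) _.
move=> a' A'a'.
apply: (linear_span_in (f := fun u => c *: mul u a')) (span_submodule _) _ _ _ Au.
  exact: is_linear_scale (mul_linear_l a') _.
move=> a Aa.
by apply: sub_span; exists a => //; exists a'.
Qed.

Lemma ling_ling_gen B S : B S -> ling mul pi B (L S).
Proof. by move=> BS B' _; apply. Qed.

Lemma ling_sub_ling_gen B T : is_bornology B -> ling mul pi B T ->
  exists2 S, B S & T `<=` L S.
Proof.
move=> [Bfin BU _] lingT.
apply: (lingT [set T | exists2 S, B S & T `<=` L S]); last by move=> S BS; exists S.
split.
- by move=> F fF; exists F; [exact: Bfin | exact: sub_ling_gen].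
- move=> T1 T2 [S1 BS1 T1S1] [S2 BS2 T2S2]; exists (S1 `|` S2); first exact: BU.
  rewrite subUset; split.
  + by apply: subset_trans T1S1 _; apply: ling_gen_mono; exact: subsetUl.
  + by apply: subset_trans T2S2 _; apply: ling_gen_mono; exact: subsetUr.
- by move=> T1 T2 T12 [S BS T2S]; exists S => //; exact: subset_trans T2S.
Qed.

Fixpoint scaled_products (F : set R) (k : nat) : set R :=
  if k is k'.+1 then [set pi *: mul a f | a in scaled_products F k' & f in F] else F.

Lemma finite_scaled_products F k : finite_set F -> finite_set (scaled_products F k).
Proof. by move=> fF; elim: k => [|k IH] //=; exact: finite_image2. Qed.

Lemma scaled_products_sub_ling_gen F W k : F `<=` W -> scaled_products F k `<=` L W.
Proof.
move=> FW; elim: k => [|k IH] /=; first exact: subset_trans FW (@sub_ling_gen W).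
by move=> _ [a Fa [f Ff <-]]; apply: ling_gen_mulr (IH a Fa) (FW f Ff).
Qed.

Lemma long_monomial_in_pimul S W n x0 xs :
  S `<=` W -> [set mul x y | x in S & y in S] `<=` W ->
  (2 * n <= size xs)%N -> S x0 -> (forall x, x \in xs -> S x) ->
  pimul pi n (L W) (pi ^+ size xs *: nprod mul x0 xs).
Proof.
move=> SW SSW n_le Sx0 Sxs; have [mulA _ _] := mul_alg.
have [|gs [Wgs gs_size gs_eq]] :=
  foldl_group_pairs mulA SW SSW (m := size xs - n) x0 _ Sxs.
  by apply/andP; split; lia.
exists (pi ^+ (size xs - n) *: nprod mul x0 gs).
  by apply: sub_span; exists x0; [exact: SW | exists gs => //; rewrite gs_size].
by rewrite scalerA -exprD subnKC /nprod ?gs_eq //; lia.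
Qed.

Lemma monomial_in_spanD_pimul S F T W n x0 xs :
  S `<=` spanD_pimul pi n F T -> F `<=` T -> T `<=` W -> S `<=` W ->
  S x0 -> (forall x, x \in xs -> S x) ->
  spanD_pimul pi n (scaled_products F (size xs)) (L W)
    (pi ^+ size xs *: nprod mul x0 xs).
Proof.
move=> SFT FT TW SW Sx0; elim/last_ind: xs => [_|xs s IH Sxs].
  rewrite expr0 scale1r; apply: spanD_pimul_mono (SFT _ Sx0) => //.
  exact: subset_trans TW (@sub_ling_gen W).
have Ss : S s by apply: Sxs; rewrite mem_rcons mem_head.
have [|u Fu [_ [t Lt <-] ut]] := IH.
  by move=> x xxs; apply: Sxs; rewrite mem_rcons inE xxs orbT.
have [x Fx [_ [y Ty <-] xy]] := SFT s Ss.
rewrite size_rcons; exists (pi *: mul u x); first exact: span_mul.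
exists (pi ^+ n *: (pi *: mul u y + pi *: mul t s)).
  exists (pi *: mul u y + pi *: mul t s) => //; apply: submoduleD (span_submodule _) _ _.
    apply: ling_gen_mulr (TW _ Ty).
    apply: span_subset_submodule (span_submodule _) _ _ Fu.
    exact: scaled_products_sub_ling_gen (subset_trans FT TW).
  exact: ling_gen_mulr Lt (SW _ Ss).
(* substitute pi^k x_0 ... x_k = u + pi^n t and s = x + pi^n y, then expand *)
rewrite /nprod foldl_rcons -/(nprod mul x0 xs) exprS -scalerA.
rewrite -(is_linearZ (mul_linear_l s) (pi ^+ size xs)) -ut (is_linearD (mul_linear_l s)).
rewrite (is_linearZ (mul_linear_l s)) -xy.
rewrite (is_linearD (mul_linear_r u)) (is_linearZ (mul_linear_r u)).
by rewrite !scalerDr !scalerA addrA [pi ^+ n * pi]mulrC.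
Qed.

Lemma ling_gen_compactoid B S : born_alg mul B -> nuclear pi B -> B S ->
  compactoid pi (ling mul pi B) (L S).
Proof.
move=> [[[_ BU _] Bsub] BM] nB BS.
have [T [_ BT ST cT]] := nB S BS.
have [W [sW BW]] := Bsub _ (BU _ _ (BU _ _ BS BT) (BM _ _ BS BS)).
rewrite !subUset => -[[SW TW] SSW].
exists (L W); split; [exact: span_submodule | exact: ling_ling_gen |
  exact: ling_gen_mono |].
move=> n; have [F [fF FT SFT]] := cT n.
exists (\bigcup_(k in `I_(2 * n).+1) scaled_products F k); split.
- by apply: bigcup_finite => [|k _]; [exact: finite_II | exact: finite_scaled_products].
- move=> x [k _ Fkx].
  by apply: scaled_products_sub_ling_gen (subset_trans FT TW) _ Fkx.
apply: span_subset_submodule; first exact/submodule_spanD_pimul/span_submodule.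
move=> _ [x0 Sx0 [xs Sxs <-]].
have [short|long] := leqP (size xs) (2 * n).
  apply: spanD_pimul_mono (monomial_in_spanD_pimul SFT FT TW SW Sx0 Sxs) => // x Fx.
  by exists (size xs).
exists 0; first exact: submodule0 (span_submodule _).
exists (pi ^+ size xs *: nprod mul x0 xs); last exact: add0r.
by apply: long_monomial_in_pimul SW SSW _ Sx0 Sxs; exact: ltnW.
Qed.

Lemma ling_nuclear B : born_alg mul B -> nuclear pi B -> nuclear pi (ling mul pi B).
Proof.
move=> B_alg nB T /(ling_sub_ling_gen B_alg.1.1) [S BS TS].
exact: compactoid_subset TS (ling_gen_compactoid B_alg nB BS).
Qed.

End LinearGrowth.

Unset Implicit Arguments.

Theorem proposition4p9 (V : idomainType) (pi : V) (R : lmodType V)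
  (mul : R -> R -> R) (B : set (set R)) :
  is_complete_dvr pi ->
  is_Valgebra mul -> born_alg mul B -> nuclear pi B ->
  nuclear pi (ling mul pi B) /\
  (forall (C : lmodType V) (BC : set (set C)) (j : R -> C),
     is_completion pi (ling mul pi B) BC j -> nuclear pi BC).
Proof.
move=> _ mul_alg B_alg nB; have ling_nB := ling_nuclear mul_alg B_alg nB.
by split=> // C BC j; exact: completion_nuclear.
Qed.
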